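(* Assume $a^2\rho(\mathbf P_1\mathbf E)<1$, let $\theta\in\mathbb N$ and $\mathcal X\ge0$. For every reception index $j$ and every channel state $\gamma_{S_j}$, if $x_{S_j}^2\ge\mathcal X$ then $$\mathcal J_{S_j}^\theta\le\mathbf Q_{\mathcal X}(\theta)\,\mathbf P_0^{\theta-1}\mathbf P_1\boldsymbol\delta_{\gamma_{S_j}},$$ where $\mathbf Q_{\mathcal X}(\theta):=\big[\mathcal Z_\theta(\bar a^2)-\mathcal Z_\theta(c^2)\big]\max\{\mathcal X,Bc^{-2\theta}\}+\bar M\big[\mathcal Z_\theta(a^2)-\mathcal Z_\theta(1)\big]$ and $\mathcal Z_\theta(b):=b^\theta\mathbf d^T(\mathbf I-b\mathbf P_1\mathbf E)^{-1}$.
   Context: Setup. Fix reals $a,L$ with $|a|>1$ and $\bar a:=a+L$ satisfying $0<\bar a^2<1$; fix $c$ with $\bar a^2<c^2<1$, $M>0$, $B>0$, and $\bar M:=M/(a^2-1)$. Plant $x_{k+1}=ax_k+u_k+v_k$, $v_k$ i.i.d., mean $0$, variance $M$, independent of everything else. Sensor decisions $t_k\in\{0,1\}$, receptions $r_k\in\{0,1\}$ ($r_k=0$ if $t_k=0$). Controller $u_k=L\hat x_k^+$, $\hat x_k:=\bar a\hat x_{k-1}^+$, $\hat x_k^+:=x_k$ if $r_k=1$, else $\hat x_k$. Channel state $\gamma_k\in\{1,\dots,n\}$ with $\Pr[\gamma_{k+1}=i\mid\gamma_k=j,t_k=\ell]=(\mathbf P_\ell)_{ij}$, $\mathbf P_0,\mathbf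 P_1$ column-stochastic; drop probabilities $\mathbf e\in[0,1]^n$ (if $t_k=1$, $r_k=1$ w.p. $1-e_{\gamma_k}$); $\mathbf E:=\mathrm{diag}(\mathbf e)$, $\mathbf d:=\mathbf 1-\mathbf e$, $\mathbf P^0:=\mathbf I$, $\boldsymbol\delta_i$ standard basis vectors, $\rho$ spectral radius. $r_0=1$; $R_k:=\max\{i<k:r_i=1\}$; $S_0:=0$, $S_{j+1}:=\min\{k>S_j:r_k=1\}$. $I_k^+$ is the post-transmission information at time $k$, which at a reception time $S_j$ contains $x_{S_j}$, $z^+_{S_j}=0$, $S_j$, $\gamma_{S_j}$. Performance function $h_k:=x_k^2-\max\{c^{2(k-R_k)}x_{R_k}^2,B\}$. Nominal policy $\mathcal T_k^D$: $t_i=0$ for $k\le i\le k+D-1$, $t_i=1$ for $i\ge k+D$. Performance-evaluation function: $\mathcal J_{S_j}^\theta:=\mathbb E_{\mathcal T^{\theta-1}_{S_j+1}}[h_{S_{j+1}}\mid I_{S_j}^+]=\sum_{w\ge\theta}H(w,x_{S_j}^2)\,\mathbf d^T(\mathbf P_1\mathbf E)^{w-\theta}\mathbf P_0^{\theta-1}\mathbf P_1\boldsymbol\delta_{\gamma_{S_j}}$, where $H(w,y):=\bar a^{2w}y+\bar M(a^{2w}-1)-\max\{c^{2w}y,B\}$. *)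

(* classical reals. Matrices of size n are represented as
   functions nat -> nat -> R, only indices < n being meaningful. *)
From Stdlib Require Import Reals Lra ClassicalEpsilon.
Open Scope R_scope.

Definition Vec := nat -> R.
Definition Mat := nat -> nat -> R.

Fixpoint rsum (n : nat) (f : nat -> R) : R :=
  match n with
  | O => 0
  | S k => rsum k f + f k
  end.

Definition idm : Mat := fun i j => if Nat.eq_dec i j then 1 else 0.
Definition diagm (e : Vec) : Mat := fun i j => if Nat.eq_dec i j then e i else 0.
Definition msub (A B : Mat) : Mat := fun i j => A i j - B i j.
Definition mscal (b : R) (A : Mat) : Mat := fun i j => b * A i j.
Definition mmul (n : nat) (A B : Mat) : Mat :=
  fun i j => rsum n (fun k => A i k * B k j).
Fixpoint mpow (n : nat) (A : Mat) (k : nat) : Mat :=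
  match k with
  | O => idm
  | S k' => mmul n A (mpow n A k')
  end.

Definition col_stochastic (n : nat) (P : Mat) : Prop :=
  (forall i j, (i < n)%nat -> (j < n)%nat -> 0 <= P i j) /\
  (forall j, (j < n)%nat -> rsum n (fun i => P i j) = 1).

(* matrix inverse (chosen by epsilon; meaningful when M is invertible) *)
Definition is_inverse (n : nat) (M N : Mat) : Prop :=
  forall i j, (i < n)%nat -> (j < n)%nat ->
    mmul n M N i j = idm i j /\ mmul n N M i j = idm i j.

Definition matinv (n : nat) (M : Mat) : Mat :=
  epsilon (inhabits idm) (fun N => is_inverse n M N).

(* (re, im) is a complex eigenvalue of the real matrix A: there is a nonzero
   complex vector u + i w with A (u + i w) = (re + i im)(u + i w). *)
Definition is_eigenvalue (n : nat) (A : Mat) (re im : R) : Prop :=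
  exists u w : Vec,
    (exists i, (i < n)%nat /\ (u i <> 0 \/ w i <> 0)) /\
    (forall i, (i < n)%nat ->
       rsum n (fun k => A i k * u k) = re * u i - im * w i /\
       rsum n (fun k => A i k * w k) = im * u i + re * w i).

Definition spec_radius (n : nat) (A : Mat) : R :=
  epsilon (inhabits 0)
    (is_lub (fun m => exists re im, is_eigenvalue n A re im /\
                                    m = sqrt (re ^ 2 + im ^ 2))).

Definition Zvec (n : nat) (d : Vec) (P1E : Mat) (theta : nat) (b : R) : Vec :=
  fun j => b ^ theta *
    rsum n (fun i => d i * matinv n (msub idm (mscal b P1E)) i j).

Definition Hfun (abar c Mbar B a : R) (w : nat) (y : R) : R :=
  abar ^ (2 * w) * y + Mbar * (a ^ (2 * w) - 1) - Rmax (c ^ (2 * w) * y) B.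

From Stdlib Require Import Reals Lra Lia FunctionalExtensionality ClassicalEpsilon.
From mathcomp Require all_boot all_order all_algebra ring complex Rstruct.
From Coquelicot Require Coquelicot.
Open Scope R_scope.

(* Since a^2 rho(P1 E) < 1, the entries of (P1 E)^k are O(R0^k) for some R0 < a^-2:
   over C the characteristic polynomial splits into factors X - z with |z| < R0, and by
   Cayley-Hamilton peeling off one factor M - z at a time gives linear recursions
   t (k+1) = z t k + u k with geometrically bounded forcing.  Hence for 0 <= b <= a^2 the
   Neumann series sum_k b^k (P1 E)^k converges to (I - b P1 E)^-1, so that
   sum_k b^(theta+k) d^T (P1 E)^k P01 delta_gamma = Z_theta(b) P01 delta_gamma.
   Finally H(theta+k, y) is bounded termwise by
   max{X, B c^(-2 theta)} (abar^(2w) - c^(2w)) + Mbar (a^(2w) - 1), a combination of the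
   four geometric sequences abar^2, c^2, a^2, 1, and the weights d^T (P1 E)^k P01 are
   nonnegative, so the bound passes to the series. *)

Lemma rsum_ext m f g : (forall i, (i < m)%nat -> f i = g i) -> rsum m f = rsum m g.
Proof.
induction m as [|m IH]; intros H; simpl; [reflexivity|].
rewrite IH by (intros; apply H; lia). rewrite H by lia. reflexivity.
Qed.

Lemma rsum_zero m : rsum m (fun _ => 0) = 0.
Proof. induction m; simpl; [|rewrite IHm]; ring. Qed.

Lemma rsum_plus m f g : rsum m (fun i => f i + g i) = rsum m f + rsum m g.
Proof. induction m; simpl; [|rewrite IHm]; ring. Qed.

Lemma rsum_minus m f g : rsum m (fun i => f i - g i) = rsum m f - rsum m g.
Proof. induction m; simpl; [|rewrite IHm]; ring. Qed.

Lemma rsum_scal m c f : rsum m (fun i => c * f i) = c * rsum m f.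
Proof. induction m; simpl; [|rewrite IHm]; ring. Qed.

Lemma rsum_swap m p (f : nat -> nat -> R) :
  rsum m (fun i => rsum p (fun j => f i j)) = rsum p (fun j => rsum m (fun i => f i j)).
Proof.
induction m as [|m IH]; simpl.
- symmetry; apply rsum_zero.
- rewrite IH, <- rsum_plus; reflexivity.
Qed.

Lemma rsum_nonneg m f : (forall i, (i < m)%nat -> 0 <= f i) -> 0 <= rsum m f.
Proof.
induction m as [|m IH]; intros H; simpl; [lra|].
assert (0 <= f m) by (apply H; lia).
assert (0 <= rsum m f) by (apply IH; intros; apply H; lia).
lra.
Qed.

Lemma rsum_idm_r m f j : (j < m)%nat -> rsum m (fun l => f l * idm l j) = f j.
Proof.
induction m as [|m IH]; intros Hj; [lia|]. simpl. unfold idm at 2.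
destruct (Nat.eq_dec m j) as [->|Hne].
- rewrite (rsum_ext _ _ (fun _ => 0)), rsum_zero; [ring|].
  intros i Hi. unfold idm. destruct (Nat.eq_dec i j); [lia|ring].
- rewrite IH by lia. ring.
Qed.

Lemma rsum_idm_l m f i : (i < m)%nat -> rsum m (fun l => idm i l * f l) = f i.
Proof.
intros H. rewrite <- (rsum_idm_r m f i H). apply rsum_ext. intros l _.
unfold idm. destruct (Nat.eq_dec i l), (Nat.eq_dec l i); subst; try lia; ring.
Qed.

Lemma mmul_assoc n A B C : mmul n (mmul n A B) C = mmul n A (mmul n B C).
Proof.
apply functional_extensionality; intro i. apply functional_extensionality; intro j.
unfold mmul.
transitivity (rsum n (fun l => rsum n (fun k => A i k * B k l * C l j))).
- apply rsum_ext; intros l _. rewrite Rmult_comm, <- rsum_scal. apply rsum_ext; intros; ring.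
- rewrite rsum_swap. apply rsum_ext; intros k _. rewrite <- rsum_scal. apply rsum_ext; intros; ring.
Qed.

Lemma mpow_Sr n A k i j : (i < n)%nat -> (j < n)%nat ->
  mpow n A (S k) i j = mmul n (mpow n A k) A i j.
Proof.
revert i j. induction k as [|k IH]; intros i j Hi Hj.
- simpl. unfold mmul. rewrite rsum_idm_r, rsum_idm_l by assumption. reflexivity.
- change (mpow n A (S (S k)) i j) with (mmul n A (mpow n A (S k)) i j).
  transitivity (mmul n A (mmul n (mpow n A k) A) i j).
  + unfold mmul at 1 2. apply rsum_ext. intros l Hl. rewrite IH by assumption. reflexivity.
  + rewrite <- mmul_assoc. reflexivity.
Qed.

Lemma mmul_nonneg n X Y : (forall i j, (i < n)%nat -> (j < n)%nat -> 0 <= X i j) ->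
  (forall i j, (i < n)%nat -> (j < n)%nat -> 0 <= Y i j) ->
  forall i j, (i < n)%nat -> (j < n)%nat -> 0 <= mmul n X Y i j.
Proof. intros HX HY i j Hi Hj. apply rsum_nonneg. intros l Hl. apply Rmult_le_pos; auto. Qed.

Lemma mpow_nonneg n A : (forall i j, (i < n)%nat -> (j < n)%nat -> 0 <= A i j) ->
  forall k i j, (i < n)%nat -> (j < n)%nat -> 0 <= mpow n A k i j.
Proof.
intros HA k. induction k as [|k IH]; intros i j Hi Hj; simpl.
- unfold idm. destruct (Nat.eq_dec i j); lra.
- apply mmul_nonneg; auto.
Qed.

Lemma linear_recurrence_geometric_bound (nz R0 C : R) (t u : nat -> R) :
  0 <= nz -> nz < R0 -> (forall k, 0 <= t k) -> (forall k, 0 <= u k) ->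
  (forall k, t (S k) <= nz * t k + u k) -> (forall k, u k <= C * R0 ^ k) ->
  exists D, forall k, t k <= D * R0 ^ k.
Proof.
intros Hnz HR0 Ht Hu Hrec Hb.
assert (HC : 0 <= C) by (specialize (Hb 0%nat); specialize (Hu 0%nat); simpl in Hb; lra).
set (q := C / (R0 - nz)).
assert (Hq : q * (R0 - nz) = C) by (unfold q; field; lra).
assert (Hq0 : 0 <= q) by (unfold q; apply Rmult_le_pos; [lra|left; apply Rinv_0_lt_compat; lra]).
exists (t 0%nat + q).
induction k as [|k IH].
- simpl. specialize (Ht 0%nat). lra.
- assert (Hp : 0 <= R0 ^ k) by (apply pow_le; lra).
  specialize (Hrec k). specialize (Hb k). specialize (Ht 0%nat). simpl.
  assert (nz * t k <= nz * ((t 0%nat + q) * R0 ^ k)) by (apply Rmult_le_compat_l; lra).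
  assert (0 <= t 0%nat * (R0 - nz) * R0 ^ k) by (apply Rmult_le_pos; [apply Rmult_le_pos|]; lra).
  assert (E : (t 0%nat + q) * (R0 * R0 ^ k) - (nz * ((t 0%nat + q) * R0 ^ k) + C * R0 ^ k)
     = t 0%nat * (R0 - nz) * R0 ^ k) by (rewrite <- Hq; ring).
  lra.
Qed.

Module Spectral.
Import all_boot all_order all_algebra ring complex Rstruct.
Import Order.TTheory GRing.Theory Num.Theory.
Local Open Scope ring_scope.
Local Open Scope complex_scope.

Lemma rsumE (n : nat) (f : nat -> R) : rsum n f = \sum_(i < n) f i.
Proof.
elim: n => [|n IH] /=; first by rewrite big_ord0.
by rewrite big_ord_recr /= IH.
Qed.

Lemma complexE (x : R[i]) : x = (complex.Re x) +i* (complex.Im x).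
Proof. by case: x. Qed.

Lemma sum_real_mul_complex (m : nat) (F G H : nat -> R) :
  \sum_(l < m) ((F l)%:C * (G l +i* H l)) =
  (\sum_(l < m) F l * G l) +i* (\sum_(l < m) F l * H l).
Proof.
elim: m => [|m IH]; first by rewrite !big_ord0.
rewrite !big_ord_recr /= IH.
by apply/eqP; rewrite eq_complex /=; apply/andP; split; apply/eqP; ring.
Qed.

Lemma char_poly_trmx (F : fieldType) n (M : 'M[F]_n) : char_poly M^T = char_poly M.
Proof.
rewrite /char_poly -[in RHS]det_tr; congr (determinant _).
by apply/matrixP => i j; rewrite !mxE eq_sym.
Qed.

Lemma normc_ge0 (x : R[i]) : Rle 0 (Normc.normc x).
Proof. by case: x => a b; apply/RleP; rewrite /Normc.normc; exact: sqrtr_ge0. Qed.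

Lemma normcR (x : R) : Normc.normc (x%:C) = Rabs x.
Proof. by rewrite /Normc.normc /= expr0n /= addr0 sqrtr_sqr. Qed.

Lemma normcE (z : R[i]) :
  Normc.normc z = sqrt (Rplus (pow (complex.Re z) 2) (pow (complex.Im z) 2)).
Proof. by case: z => a b; rewrite RsqrtE !RpowE. Qed.

Section Complexification.
Variables (n' : nat) (A : Mat).
Local Notation n := n'.+1.

Definition cmx : 'M[R[i]]_n := \matrix_(i, j) (A i j)%:C.

Lemma cmx_exp k (i j : 'I_n) : (cmx ^+ k) i j = (mpow n A k i j)%:C.
Proof.
elim: k i j => [|k IH] i j.
  rewrite expr0 /= /idm !mxE.
  case: eqVneq => [->|Hne]; case: Nat.eq_dec => // H.
  by move: Hne; rewrite (val_inj H) eqxx.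
rewrite exprS -mulmxE mxE /= /mmul rsumE rmorph_sum /=.
by apply: eq_bigr => l _; rewrite IH mxE rmorphM.
Qed.

Lemma eigenvalue_of_char_root (z : R[i]) : root (char_poly cmx) z ->
  is_eigenvalue n A (complex.Re z) (complex.Im z).
Proof.
rewrite -char_poly_trmx -eigenvalue_root_char => /eigenvalueP [v Hv Hnz].
pose u l := complex.Re (v 0 (inord l)).
pose w l := complex.Im (v 0 (inord l)).
have vE (l : 'I_n) : v 0 l = u l +i* w l by rewrite /u /w inord_val -complexE.
exists u, w; split.
  case: (pickP (fun l : 'I_n => v 0 l != 0)) => [l Hl | H].
    exists l; split; first exact/ssrnat.ltP/ltn_ord.
    case: (Req_EM_T (u l) 0) => Hu; last by left.
    case: (Req_EM_T (w l) 0) => Hw; last by right.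
    by move: Hl; rewrite vE Hu Hw eqxx.
  case/negP: Hnz; apply/eqP/matrixP => i l; rewrite ord1 !mxE.
  by move/negbFE/eqP: (H l).
move=> i /ssrnat.ltP Hi.
have := congr1 (fun M : 'rV[R[i]]_n => M ord0 (inord i)) Hv; rewrite !mxE.
under eq_bigr => l _ do rewrite !mxE vE mulrC.
rewrite sum_real_mul_complex (vE (inord i)) inordK // (complexE z) => -[H1 H2].
by rewrite !rsumE; split; [rewrite H1 | rewrite H2 /= addrC].
Qed.

Lemma char_root_of_eigenvalue re im : is_eigenvalue n A re im ->
  root (char_poly cmx) (re +i* im).
Proof.
move=> [u [w [[i0 [Hi0 Hnz]] Heq]]].
rewrite -char_poly_trmx -eigenvalue_root_char; apply/eigenvalueP.
exists (\row_l (u l +i* w l)).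
  apply/rowP => j; rewrite !mxE.
  under eq_bigr => l _ do rewrite !mxE mulrC.
  rewrite sum_real_mul_complex.
  have [H1 H2] := Heq j (ssrnat.ltP (ltn_ord j)).
  rewrite !rsumE in H1 H2; rewrite H1 H2 /=.
  apply/eqP; rewrite eq_complex /= ?RplusE ?RminusE ?RmultE.
  by apply/andP; split; apply/eqP; ring.
apply/negP => /eqP/rowP /(_ (inord i0)); rewrite !mxE inordK; last exact/ssrnat.ltP.
by move=> [Hu Hw]; case: Hnz.
Qed.

Lemma char_poly_split : exists rs : seq R[i],
  char_poly cmx = \prod_(z <- rs) ('X - z%:P).
Proof.
have [rs Hrs] := closed_field_poly_normal (char_poly cmx).
by exists rs; rewrite Hrs (monicP (char_poly_monic _)) scale1r.
Qed.

End Complexification.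

Lemma annihilated_exp_geometric_bound n' (M : 'M[R[i]]_n'.+1) (R0 : R) (rs : seq R[i]) :
  (forall z, z \in rs -> Rlt (Normc.normc z) R0) ->
  forall N : 'M[R[i]]_n'.+1, N *m \prod_(z <- rs) (M - z%:M) = 0 ->
  forall i j, exists C, forall k,
    Rle (Normc.normc ((N *m M ^+ k) i j)) (Rmult C (pow R0 k)).
Proof.
elim: rs => [|x rs IH] Hrs N HN i j.
  rewrite big_nil mulmx1 in HN; exists 0%R => k.
  by rewrite HN mul0mx mxE Rmult_0_l normcR Rabs_R0; apply: Rle_refl.
rewrite big_cons mulmxA in HN.
have Hx : Rlt (Normc.normc x) R0 by apply: Hrs; rewrite inE eqxx.
have [C HC] : exists C, forall k, Rle (Normc.normc ((N *m (M - x%:M) *m M ^+ k) i j))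
                                      (Rmult C (pow R0 k)).
  by apply: IH HN i j => z Hz; apply: Hrs; rewrite inE Hz orbT.
pose t k := (N *m M ^+ k) i j.
pose u k := (N *m (M - x%:M) *m M ^+ k) i j.
have Hrec k : t k.+1 = x * t k + u k.
  rewrite /t /u exprS -mulmxE mulmxA mulmxBr mulmxBl mul_mx_scalar -scalemxAl !mxE.
  by ring.
have Hle k : Rle (Normc.normc (t k.+1))
    (Rplus (Rmult (Normc.normc x) (Normc.normc (t k))) (Normc.normc (u k))).
  by rewrite Hrec; apply/RleP; apply: le_trans (le_normcD _ _) _; rewrite Normc.normcM.
have [D HD] := linear_recurrence_geometric_bound (Normc.normc x) R0 C
  (fun k => Normc.normc (t k)) (fun k => Normc.normc (u k)) (normc_ge0 x) Hx
  (fun k => normc_ge0 _) (fun k => normc_ge0 _) Hle HC.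
by exists D.
Qed.

Lemma mpow_geometric_bound n' (A : Mat) (R0 : R) :
  (forall re im, is_eigenvalue n'.+1 A re im ->
     Rlt (sqrt (Rplus (pow re 2) (pow im 2))) R0) ->
  forall i j, (i < n'.+1)%coq_nat -> (j < n'.+1)%coq_nat ->
  exists C, forall k, Rle (Rabs (mpow n'.+1 A k i j)) (Rmult C (pow R0 k)).
Proof.
move=> Heig i j /ssrnat.ltP Hi /ssrnat.ltP Hj.
have [rs Hrs] := char_poly_split n' A.
have Hz z : z \in rs -> Rlt (Normc.normc z) R0.
  move=> Hz; rewrite normcE; apply: Heig; apply: eigenvalue_of_char_root.
  by rewrite Hrs root_prod_XsubC.
have HCH : 1 *m \prod_(z <- rs) (cmx n' A - z%:M) = 0.
  rewrite mul1mx; have := Cayley_Hamilton (cmx n' A); rewrite Hrs rmorph_prod.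
  by under eq_bigr => z _ do rewrite rmorphB /= horner_mx_X horner_mx_C.
have [C HC] := annihilated_exp_geometric_bound n' (cmx n' A) R0 rs Hz 1 HCH (inord i) (inord j).
exists C => k; have := HC k.
by rewrite mul1mx cmx_exp normcR !inordK //; apply/ssrnat.ltP.
Qed.

Lemma eigenvalue_modulus_bounded n' (A : Mat) : exists Bd, forall re im,
  is_eigenvalue n'.+1 A re im -> Rle (sqrt (Rplus (pow re 2) (pow im 2))) Bd.
Proof.
have [rs Hrs] := char_poly_split n' A.
exists (\sum_(z <- rs) Normc.normc z) => re im Heig.
have := char_root_of_eigenvalue n' A re im Heig; rewrite Hrs root_prod_XsubC => Hin.
rewrite -[sqrt _]/(sqrt (Rplus (pow (complex.Re (re +i* im)) 2)
                               (pow (complex.Im (re +i* im)) 2))) -normcE.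
apply/RleP; rewrite (big_rem _ Hin) /= lerDl.
by apply: sumr_ge0 => z _; apply/RleP; apply: normc_ge0.
Qed.

End Spectral.

Lemma eigenvalue_modulus_le_spec_radius n' A re im :
  is_eigenvalue (S n') A re im -> sqrt (re ^ 2 + im ^ 2) <= spec_radius (S n') A.
Proof.
intros Heig.
destruct (Spectral.eigenvalue_modulus_bounded n' A) as [Bd HBd].
set (E := fun m => exists re im, is_eigenvalue (S n') A re im /\ m = sqrt (re ^ 2 + im ^ 2)).
assert (Hlub : exists m, is_lub E m).
{ destruct (completeness E) as [m Hm].
  - exists Bd. intros x [r [i [Hx ->]]]. apply HBd; assumption.
  - exists (sqrt (re ^ 2 + im ^ 2)), re, im; auto.
  - exists m; assumption. }
apply (epsilon_spec (inhabits 0) (is_lub E) Hlub).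
exists re, im; auto.
Qed.

Lemma mpow_geometric_bound_of_spec_radius n' A r :
  0 < r -> r * spec_radius (S n') A < 1 ->
  exists R0, 0 <= R0 /\ r * R0 < 1 /\
    forall i j, (i < S n')%nat -> (j < S n')%nat ->
      exists C, forall k, Rabs (mpow (S n') A k i j) <= C * R0 ^ k.
Proof.
intros Hr Hrho.
(* Without a known eigenvalue, the epsilon-chosen [spec_radius] may be negative. *)
set (rho := Rmax (spec_radius (S n') A) 0).
assert (Hrho0 : 0 <= rho) by apply Rmax_r.
assert (Hrhor : rho < / r).
{ apply (Rmult_lt_reg_l r); [assumption|]. rewrite Rinv_r by lra.
  unfold rho, Rmax; destruct Rle_dec; lra. }
exists ((rho + / r) / 2). split; [lra|]. split.
{ assert (r * rho < 1) by (rewrite <- (Rinv_r r) by lra; apply Rmult_lt_compat_l; lra).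
  replace (r * ((rho + / r) / 2)) with ((r * rho + 1) / 2) by (field; lra). lra. }
apply Spectral.mpow_geometric_bound. intros re im Heig.
assert (spec_radius (S n') A <= rho) by apply Rmax_l.
pose proof (eigenvalue_modulus_le_spec_radius n' A re im Heig). lra.
Qed.

Import Coquelicot.

Lemma is_series_zero : is_series (fun _ => 0) 0.
Proof.
apply is_series_Reals. intros eps Heps. exists 0%nat. intros m _.
rewrite sum_cte, Rmult_0_l, R_dist_eq. assumption.
Qed.

Lemma is_series_Rplus u v lu lv : is_series u lu -> is_series v lv ->
  is_series (fun k => u k + v k) (lu + lv).
Proof. exact (is_series_plus u v lu lv). Qed.

Lemma is_series_Rminus u v lu lv : is_series u lu -> is_series v lv ->
  is_series (fun k => u k - v k) (lu - lv).
Proof. exact (is_series_minus u v lu lv). Qed.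

Lemma is_series_Rmult_l c u l : is_series u l -> is_series (fun k => c * u k) (c * l).
Proof. exact (is_series_scal_l c u l). Qed.

Lemma is_series_le u v lu lv : is_series u lu -> is_series v lv ->
  (forall k, u k <= v k) -> lu <= lv.
Proof.
intros Hu Hv Huv.
assert (Hd := is_series_Rminus _ _ _ _ Hv Hu).
assert (H : Series (fun _ => 0) <= Series (fun k => v k - u k)).
{ apply Series_le; [intros k; specialize (Huv k); lra | eexists; exact Hd]. }
rewrite (is_series_unique _ _ Hd), (is_series_unique _ _ is_series_zero) in H. lra.
Qed.

Lemma is_series_rsum m (f : nat -> nat -> R) (l : nat -> R) :
  (forall i, (i < m)%nat -> is_series (fun k => f i k) (l i)) ->
  is_series (fun k => rsum m (fun i => f i k)) (rsum m l).
Proof.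
induction m as [|m IH]; intros H; simpl.
- apply is_series_zero.
- apply is_series_Rplus; [apply IH; intros i Hi|]; apply H; lia.
Qed.

Lemma ex_series_geometric_bound (u : nat -> R) C q : 0 <= q < 1 ->
  (forall k, Rabs (u k) <= C * q ^ k) -> ex_series u.
Proof.
intros Hq H. apply (ex_series_le u (fun k => C * q ^ k)); [exact H|].
apply (ex_series_scal_l C (fun k => q ^ k)), ex_series_geom. rewrite Rabs_pos_eq; lra.
Qed.

Lemma is_series_shift (u : nat -> R) b s t :
  is_series (fun k => b ^ k * u k) s -> is_series (fun k => b ^ k * u (S k)) t ->
  b * t = s - u 0%nat.
Proof.
intros Hs Ht.
assert (Hs' : is_series (fun k => b ^ S k * u (S k)) (s - u 0%nat)).
{ assert (E : s - u 0%nat + b ^ 0 * u 0%nat = s) by (simpl; ring).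
  rewrite <- E in Hs. exact (is_series_incr_1 (fun k => b ^ k * u k) _ Hs). }
rewrite <- (is_series_unique _ _ (is_series_Rmult_l b _ _ Ht)), <- (is_series_unique _ _ Hs').
apply Series_ext. intros k. simpl. ring.
Qed.

Lemma matinv_unique n M N : is_inverse n M N ->
  forall i j, (i < n)%nat -> (j < n)%nat -> matinv n M i j = N i j.
Proof.
intros HN i j Hi Hj.
assert (Hinv : is_inverse n M (matinv n M))
  by (unfold matinv; apply epsilon_spec; exists N; exact HN).
set (N' := matinv n M).
transitivity (mmul n N' (mmul n M N) i j).
- unfold mmul at 1. rewrite (rsum_ext _ _ (fun l => N' i l * idm l j)).
  + rewrite rsum_idm_r; auto.
  + intros l Hl. f_equal. apply (proj1 (HN l j Hl Hj)).
- rewrite <- mmul_assoc. unfold mmul at 1.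
  rewrite (rsum_ext _ _ (fun l => idm i l * N l j)).
  + rewrite rsum_idm_l; auto.
  + intros l Hl. f_equal. apply (proj2 (Hinv i l Hi Hl)).
Qed.

Section Neumann.
Variables (n : nat) (A : Mat) (b : R).
Hypothesis Hconv : forall i j, (i < n)%nat -> (j < n)%nat ->
  ex_series (fun k => b ^ k * mpow n A k i j).

Let N i j := Series (fun k => b ^ k * mpow n A k i j).

Let is_series_N i j : (i < n)%nat -> (j < n)%nat ->
  is_series (fun k => b ^ k * mpow n A k i j) (N i j).
Proof. intros Hi Hj. apply Series_correct, Hconv; assumption. Qed.

Lemma neumann_mul_l i j : (i < n)%nat -> (j < n)%nat ->
  mmul n (msub idm (mscal b A)) N i j = idm i j.
Proof.
intros Hi Hj. unfold mmul, msub, mscal.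
rewrite (rsum_ext _ _ (fun l => idm i l * N l j - b * (A i l * N l j))) by (intros; ring).
rewrite rsum_minus, rsum_scal, rsum_idm_l by assumption.
assert (Ht : is_series (fun k => b ^ k * mpow n A (S k) i j) (rsum n (fun l => A i l * N l j))).
{ eapply is_series_ext; [|apply (is_series_rsum n (fun l k => A i l * (b ^ k * mpow n A k l j)))].
  - intros k. simpl. unfold mmul. rewrite <- rsum_scal. apply rsum_ext. intros; ring.
  - intros l Hl. apply is_series_Rmult_l, is_series_N; assumption. }
rewrite (is_series_shift _ _ _ _ (is_series_N i j Hi Hj) Ht). cbn [mpow]. ring.
Qed.

Lemma neumann_mul_r i j : (i < n)%nat -> (j < n)%nat ->
  mmul n N (msub idm (mscal b A)) i j = idm i j.
Proof.
intros Hi Hj. unfold mmul, msub, mscal.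
rewrite (rsum_ext _ _ (fun l => N i l * idm l j - b * (A l j * N i l))) by (intros; ring).
rewrite rsum_minus, rsum_scal, rsum_idm_r by assumption.
assert (Ht : is_series (fun k => b ^ k * mpow n A (S k) i j) (rsum n (fun l => A l j * N i l))).
{ eapply is_series_ext; [|apply (is_series_rsum n (fun l k => A l j * (b ^ k * mpow n A k i l)))].
  - intros k. rewrite mpow_Sr by assumption. unfold mmul. rewrite <- rsum_scal.
    apply rsum_ext. intros; ring.
  - intros l Hl. apply is_series_Rmult_l, is_series_N; assumption. }
rewrite (is_series_shift _ _ _ _ (is_series_N i j Hi Hj) Ht). cbn [mpow]. ring.
Qed.

Lemma is_series_neumann i j : (i < n)%nat -> (j < n)%nat ->
  is_series (fun k => b ^ k * mpow n A k i j) (matinv n (msub idm (mscal b A)) i j).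
Proof.
intros Hi Hj. rewrite (matinv_unique n _ N) by (try split; auto using neumann_mul_l, neumann_mul_r).
apply is_series_N; assumption.
Qed.

End Neumann.

Lemma ex_series_neumann n A b R0 : 0 <= R0 -> Rabs b * R0 < 1 ->
  (forall i j, (i < n)%nat -> (j < n)%nat ->
     exists C, forall k, Rabs (mpow n A k i j) <= C * R0 ^ k) ->
  forall i j, (i < n)%nat -> (j < n)%nat -> ex_series (fun k => b ^ k * mpow n A k i j).
Proof.
intros HR0 Hb Hbd i j Hi Hj. destruct (Hbd i j Hi Hj) as [C HC].
apply (ex_series_geometric_bound _ C (Rabs b * R0)).
- split; [apply Rmult_le_pos; [apply Rabs_pos|]|]; assumption.
- intros k. rewrite Rabs_mult, <- RPow_abs, Rpow_mult_distr.
  replace (C * (Rabs b ^ k * R0 ^ k)) with (Rabs b ^ k * (C * R0 ^ k)) by ring.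
  apply Rmult_le_compat_l; [apply pow_le, Rabs_pos | apply HC].
Qed.

Lemma is_series_Zvec n d A theta b V g :
  (forall i j, (i < n)%nat -> (j < n)%nat ->
     is_series (fun k => b ^ k * mpow n A k i j) (matinv n (msub idm (mscal b A)) i j)) ->
  is_series (fun k => b ^ (theta + k) * rsum n (fun i => d i * mmul n (mpow n A k) V i g))
            (rsum n (fun j => Zvec n d A theta b j * V j g)).
Proof.
intros HN. set (Inv := matinv n (msub idm (mscal b A))).
replace (rsum n (fun j => Zvec n d A theta b j * V j g)) with
  (b ^ theta * rsum n (fun i => d i * rsum n (fun j => Inv i j * V j g))).
- eapply is_series_ext; [|apply is_series_Rmult_l, is_series_rsum; intros i Hi;
    apply is_series_Rmult_l, is_series_rsum; intros j Hj;
    apply (is_series_scal_r (V j g)), HN; assumption].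
  intros k. simpl. rewrite pow_add, Rmult_assoc. f_equal. unfold mmul.
  rewrite <- rsum_scal. apply rsum_ext. intros i _.
  rewrite <- !rsum_scal. apply rsum_ext. intros; ring.
- transitivity (rsum n (fun i => rsum n (fun j => b ^ theta * (d i * (Inv i j * V j g))))).
  + rewrite <- rsum_scal. apply rsum_ext. intros i _.
    rewrite <- !rsum_scal. apply rsum_ext. intros; ring.
  + rewrite rsum_swap. apply rsum_ext. intros j _. unfold Zvec. fold Inv.
    rewrite Rmult_assoc, (Rmult_comm (rsum _ _)), <- !rsum_scal. apply rsum_ext. intros; ring.
Qed.

Lemma HfunE abar c Mbar B a w y :
  Hfun abar c Mbar B a w y
  = (abar ^ 2) ^ w * y + Mbar * ((a ^ 2) ^ w - 1) - Rmax ((c ^ 2) ^ w * y) B.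
Proof. unfold Hfun. rewrite !pow_mult. reflexivity. Qed.

(* Case analysis on [max {X, B c^(-2 th)}]: below it the threshold [B] dominates
   [c^(2w) y], above it the gap [c^(2w) - abar^(2w)] is paid at rate [y]. *)
Lemma Hfun_le_envelope abar c Mbar B a y X th w :
  0 < abar ^ 2 -> abar ^ 2 < c ^ 2 -> c ^ 2 < 1 -> 0 < B -> 0 <= X -> X <= y -> (th <= w)%nat ->
  Hfun abar c Mbar B a w y <=
  Rmax X (B / c ^ (2 * th)) * ((abar ^ 2) ^ w - (c ^ 2) ^ w) + Mbar * ((a ^ 2) ^ w - 1).
Proof.
intros H1 H2 H3 HB HX Hy Hw. rewrite HfunE, pow_mult.
set (P := (abar ^ 2) ^ w). set (Cw := (c ^ 2) ^ w). set (Ct := (c ^ 2) ^ th).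
assert (HP : 0 < P) by (apply pow_lt; lra).
assert (HPC : P <= Cw) by (apply pow_incr; lra).
assert (HCt : 0 < Ct) by (apply pow_lt; lra).
assert (HCw : Cw <= Ct).
{ unfold Cw, Ct. replace w with (th + (w - th))%nat by lia. rewrite pow_add.
  assert (0 <= (c ^ 2) ^ (w - th) <= 1)
    by (split; [apply pow_le | rewrite <- (pow1 (w - th)); apply pow_incr]; nra).
  assert (0 < (c ^ 2) ^ th) by (apply pow_lt; lra). nra. }
assert (HBC : B / Ct * Ct = B) by (field; lra).
assert (HBC0 : 0 < B / Ct) by (apply Rdiv_lt_0_compat; lra).
assert (Hmax1 : Cw * y <= Rmax (Cw * y) B) by apply Rmax_l.
assert (Hmax2 : B <= Rmax (Cw * y) B) by apply Rmax_r.
destruct (Rle_dec (B / Ct) X) as [HXB|HXB].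
- rewrite (Rmax_left X) by lra.
  assert ((Cw - P) * X <= (Cw - P) * y) by (apply Rmult_le_compat_l; lra). lra.
- rewrite (Rmax_right X) by lra.
  destruct (Rle_dec (B / Ct) y) as [Hy2|Hy2].
  + assert ((Cw - P) * (B / Ct) <= (Cw - P) * y) by (apply Rmult_le_compat_l; lra). lra.
  + assert (P * y <= P * (B / Ct)) by (apply Rmult_le_compat_l; lra).
    assert (Cw * (B / Ct) <= Ct * (B / Ct)) by (apply Rmult_le_compat_r; lra). lra.
Qed.

Lemma ex_series_Rmax_mul (u w : nat -> R) (y B Su Sw : R) :
  (forall k, 0 <= u k) -> (forall k, 0 <= w k) -> 0 <= y -> 0 <= B ->
  is_series (fun k => u k * w k) Su -> is_series w Sw ->
  ex_series (fun k => Rmax (u k * y) B * w k).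
Proof.
intros Hu Hw Hy HB HSu HSw.
apply (@ex_series_le R_AbsRing R_CompleteNormedModule _ (fun k => y * (u k * w k) + B * w k)).
- intros k. change (norm ?x) with (Rabs x).
  assert (0 <= u k * y) by (apply Rmult_le_pos; auto).
  assert (Rmax (u k * y) B <= u k * y + B) by (apply Rmax_lub; lra).
  assert (0 <= Rmax (u k * y) B) by (apply Rle_trans with B; [lra | apply Rmax_r]).
  specialize (Hw k). rewrite Rabs_pos_eq by (apply Rmult_le_pos; lra). nra.
- exists (y * Su + B * Sw). apply is_series_Rplus; apply is_series_Rmult_l; assumption.
Qed.

Lemma is_series_Hfun_le abar c Mbar B a y X theta (w : nat -> R) (Sab Sc Sa S1 : R) :
  0 < abar ^ 2 -> abar ^ 2 < c ^ 2 -> c ^ 2 < 1 -> 0 < B -> 0 <= X -> X <= y ->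
  (forall k, 0 <= w k) ->
  is_series (fun k => (abar ^ 2) ^ (theta + k) * w k) Sab ->
  is_series (fun k => (c ^ 2) ^ (theta + k) * w k) Sc ->
  is_series (fun k => (a ^ 2) ^ (theta + k) * w k) Sa ->
  is_series (fun k => 1 ^ (theta + k) * w k) S1 ->
  exists J, is_series (fun k => Hfun abar c Mbar B a (theta + k) y * w k) J /\
    J <= Rmax X (B / c ^ (2 * theta)) * (Sab - Sc) + Mbar * (Sa - S1).
Proof.
intros H1 H2 H3 HB HX Hy Hw Hab Hc Ha H1w.
assert (Hw1 : is_series w S1).
{ eapply is_series_ext; [|exact H1w]. intros k. simpl. rewrite pow1. ring. }
assert (Hc2 : 0 <= c ^ 2) by nra.
destruct (ex_series_Rmax_mul (fun k => (c ^ 2) ^ (theta + k)) w y B Sc S1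
            (fun k => pow_le _ _ Hc2) Hw ltac:(lra) ltac:(lra) Hc Hw1) as [SV HV].
set (Xm := Rmax X (B / c ^ (2 * theta))).
set (J := y * Sab + Mbar * (Sa - S1) - SV).
assert (HJ : is_series (fun k => Hfun abar c Mbar B a (theta + k) y * w k) J).
{ eapply is_series_ext;
    [|apply is_series_Rminus; [apply is_series_Rplus; apply is_series_Rmult_l;
                                [exact Hab | apply is_series_Rminus; [exact Ha | exact H1w]]
                              | exact HV]].
  intros k. match goal with |- ?l = ?r => change (@eq R l r) end. rewrite HfunE, pow1. ring. }
exists J. split; [exact HJ|].
apply (is_series_le _ _ _ _ HJ
  (is_series_Rplus _ _ _ _ (is_series_Rmult_l Xm _ _ (is_series_Rminus _ _ _ _ Hab Hc))
                           (is_series_Rmult_l Mbar _ _ (is_series_Rminus _ _ _ _ Ha H1w)))).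
intros k. rewrite pow1.
assert (Henv := Hfun_le_envelope abar c Mbar B a y X theta (theta + k)
                  H1 H2 H3 HB HX Hy ltac:(lia)).
assert (Hk := Rmult_le_compat_r _ _ _ (Hw k) Henv).
fold Xm in Hk. lra.
Qed.

Lemma rsum_mul_combination m (f g h l v : nat -> R) x y :
  rsum m (fun j => ((f j - g j) * x + y * (h j - l j)) * v j)
  = x * (rsum m (fun j => f j * v j) - rsum m (fun j => g j * v j))
    + y * (rsum m (fun j => h j * v j) - rsum m (fun j => l j * v j)).
Proof.
rewrite <- !rsum_minus, <- !rsum_scal, <- rsum_plus. apply rsum_ext. intros; ring.
Qed.

Theorem mainTheorem7
  (n : nat) (a L c M B : R) (P0 P1 : Mat) (e : Vec)
  (Hn : (1 <= n)%nat)
  (Ha : 1 < Rabs a)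
  (Habar0 : 0 < (a + L) ^ 2) (Habar1 : (a + L) ^ 2 < 1)
  (Hc0 : (a + L) ^ 2 < c ^ 2) (Hc1 : c ^ 2 < 1)
  (HM : 0 < M) (HB : 0 < B)
  (HP0 : col_stochastic n P0) (HP1 : col_stochastic n P1)
  (He : forall i, (i < n)%nat -> 0 <= e i <= 1)
  (Hrho : a ^ 2 * spec_radius n (mmul n P1 (diagm e)) < 1)
  (theta : nat) (Htheta : (1 <= theta)%nat)
  (X : R) (HX : 0 <= X) :
  let abar := a + L in
  let Mbar := M / (a ^ 2 - 1) in
  let d : Vec := fun i => 1 - e i in
  let P1E := mmul n P1 (diagm e) in
  let Z := Zvec n d P1E theta in
  let Q : Vec := fun j =>
    (Z (abar ^ 2) j - Z (c ^ 2) j) * Rmax X (B / c ^ (2 * theta))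
    + Mbar * (Z (a ^ 2) j - Z 1 j) in
  let P01 := mmul n (mpow n P0 (theta - 1)) P1 in
  forall (gamma : nat) (y : R), (gamma < n)%nat -> X <= y ->
    exists J : R,
      infinite_sum
        (fun k => Hfun abar c Mbar B a (theta + k) y *
           rsum n (fun i => d i * mmul n (mpow n P1E k) P01 i gamma))
        J
      /\ J <= rsum n (fun j => Q j * P01 j gamma).
Proof.
intros abar Mbar d P1E Z Q P01 gamma y Hgamma Hy.
change ((a + L) ^ 2) with (abar ^ 2) in *.
destruct n as [|n']; [lia|].
assert (Ha2 : 1 < a ^ 2) by (rewrite <- pow2_abs; nra).
assert (HP1E : forall i j, (i < S n')%nat -> (j < S n')%nat -> 0 <= P1E i j).
{ apply mmul_nonneg; [apply HP1|]. intros i j Hi Hj. unfold diagm.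
  destruct (Nat.eq_dec i j); [apply He | lra]; assumption. }
assert (HP01 : forall i j, (i < S n')%nat -> (j < S n')%nat -> 0 <= P01 i j)
  by (apply mmul_nonneg; [apply mpow_nonneg, HP0 | apply HP1]).
destruct (mpow_geometric_bound_of_spec_radius n' P1E (a ^ 2) ltac:(lra) Hrho)
  as [R0 [HR0 [HaR0 Hdecay]]].
set (w := fun k => rsum (S n') (fun i => d i * mmul (S n') (mpow (S n') P1E k) P01 i gamma)).
assert (Hw : forall k, 0 <= w k).
{ intros k. apply rsum_nonneg. intros i Hi. apply Rmult_le_pos.
  - unfold d. specialize (He i Hi). lra.
  - apply mmul_nonneg; [apply mpow_nonneg | ..]; assumption. }
assert (HZ : forall b, 0 <= b <= a ^ 2 ->
  is_series (fun k => b ^ (theta + k) * w k) (rsum (S n') (fun j => Z b j * P01 j gamma))).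
{ intros b Hb. apply is_series_Zvec, is_series_neumann.
  apply (ex_series_neumann _ _ _ R0); [assumption | rewrite Rabs_pos_eq; nra | exact Hdecay]. }
destruct (is_series_Hfun_le abar c Mbar B a y X theta w _ _ _ _ Habar0 Hc0 Hc1 HB HX Hy Hw
            (HZ (abar ^ 2) ltac:(lra)) (HZ (c ^ 2) ltac:(lra))
            (HZ (a ^ 2) ltac:(lra)) (HZ 1 ltac:(lra))) as [J [HJ HJle]].
exists J. split; [apply is_series_Reals; exact HJ|].
unfold Q. rewrite rsum_mul_combination. exact HJle.
Qed.
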